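(* The assignment $r\mapsto\mathfrak g(r)$ is a bijection between the set of normalized formal generalized $r$-matrices $r\in(\mathfrak g\otimes\mathfrak g)(\!(x)\!)[\![y]\!]$ and the set of Lie subalgebras $W\subseteq\mathfrak g(\!(z)\!)$ satisfying $\mathfrak g(\!(z)\!)=\mathfrak g[\![z]\!]\oplus W$ (direct sum of vector spaces).
   Context: $\Bbbk$ is a field of characteristic $0$, $\mathfrak g$ a finite-dimensional semisimple Lie algebra over $\Bbbk$ of dimension $d$ with Killing form $\kappa$, $\{b_i\}_{i=1}^d$ a $\kappa$-orthonormal basis and $\gamma=\sum_i b_i\otimes b_i$. $\frac{1}{x-y}$ denotes $\sum_{k\ge0}x^{-k-1}y^k\in\Bbbk(\!(x)\!)[\![y]\!]$. A series $r\in(\mathfrak g\otimes\mathfrak g)(\!(x)\!)[\![y]\!]$ is in standard form if $r(x,y)=\frac{\lambda(y)}{x-y}\gamma+r_0(x,y)$ with $\lambda\in\Bbbk[\![z]\!]^\times$, $r_0\in(\mathfrak g\otimes\mathfrak g)[\![x,y]\!]$; normalized if $\lambda=1$. Put $\bar r(x,y)=\frac{\lambda(x)}{x-y}\gamma-\tau(r_0(y,x))$ with $\tau$ the $\Bbbk[\![x,y]\!]$-linear extension of $a\otimes b\mapsto b\otimes a$. For $s\in(\mathfrak g\otimes\mathfrak g)(\!(x)\!)[\![y]\!]$ and $ij\in\{12,13,23\}$, $s^{ij}$ is the element of $(U(\mathfrak g)^{\otimes3})\otimes\Bbbk(\!(x_1)\!)(\!(x_2)\!)[\![x_3]\!]$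 obtained by substituting $(x,y)=(x_i,x_j)$ and placing the tensor factors in positions $i,j$. A (normalized) formal generalized $r$-matrix is a series in (normalized) standard form with $[r^{12},r^{13}]+[r^{12},r^{23}]+[r^{13},\bar r^{23}]=0$. For $s=\sum_{k\ge0}\sum_{i=1}^d s_{k,i}(x)\otimes b_iy^k$ (with $s_{k,i}\in\mathfrak g(\!(x)\!)$), $\mathfrak g(s):=\mathrm{span}_\Bbbk\{s_{k,i}(z)\}\subseteq\mathfrak g(\!(z)\!)$. *)

From HB Require Import structures.
From mathcomp Require Import all_boot all_order all_algebra.
Set Implicit Arguments. Unset Strict Implicit. Unset Printing Implicit Defensive.
Import Order.TTheory GRing.Theory Num.Theory.
Local Open Scope ring_scope.

(* The Lie algebra g: k^d with bracket given by structure constants    *)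
(* c w.r.t. the standard basis e_i = delta_mx 0 i, which plays the     *)
(* role of the kappa-orthonormal basis {b_i}.                          *)
(*   [e_i, e_j] = \sum_p c i j p e_p                                   *)

Definition ebasis (K : fieldType) (d : nat) (i : 'I_d) : 'rV[K]_d := delta_mx 0 i.

Definition lie (K : fieldType) (d : nat) (c : 'I_d -> 'I_d -> 'I_d -> K)
  (u v : 'rV[K]_d) : 'rV[K]_d :=
  \sum_(i < d) \sum_(j < d) (u 0 i * v 0 j) *: (\row_p c i j p).

Definition is_lie_algebra (K : fieldType) (d : nat) (c : 'I_d -> 'I_d -> 'I_d -> K) : Prop :=
  (forall u, lie c u u = 0) /\
  (forall u v w, lie c u (lie c v w) + lie c v (lie c w u) + lie c w (lie c u v) = 0).

(* matrix of ad u acting on row vectors: v *m ad_mx u = [u, v] *)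
Definition ad_mx (K : fieldType) (d : nat) (c : 'I_d -> 'I_d -> 'I_d -> K)
  (u : 'rV[K]_d) : 'M[K]_d :=
  \matrix_(i, j) (lie c u (ebasis K i)) 0 j.

Definition killing (K : fieldType) (d : nat) (c : 'I_d -> 'I_d -> 'I_d -> K)
  (u v : 'rV[K]_d) : K :=
  \tr (ad_mx c v *m ad_mx c u).

(* semisimple: no nonzero abelian ideal (equivalently Rad g = 0) *)
Definition semisimple (K : fieldType) (d : nat) (c : 'I_d -> 'I_d -> 'I_d -> K) : Prop :=
  forall I : {vspace 'rV[K]_d},
    (forall u v, v \in I -> lie c u v \in I) ->
    (forall u v, u \in I -> v \in I -> lie c u v = 0) ->
    I = 0%VS.

Definition killing_orthonormal (K : fieldType) (d : nat)
  (c : 'I_d -> 'I_d -> 'I_d -> K) : Prop :=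
  forall i j : 'I_d, killing c (ebasis K i) (ebasis K j) = (i == j)%:R.

(* Series.  An element s of (g (x) g)((x))[[y]] is given by its        *)
(* coefficients: s k n : 'M_d is the coefficient of y^k x^n, where an   *)
(* element of g (x) g is a d x d matrix M meaning sum M i j e_i (x) e_j. *)
(* So gamma = sum e_i (x) e_i is 1%:M and tau is transposition.        *)

(* finite sum over the integer interval [lo, hi] (empty if hi < lo) *)
Definition isum (V : nmodType) (lo hi : int) (F : int -> V) : V :=
  \sum_(i < absz (hi - lo + 1)) (if lo + (i : nat)%:Z <= hi then F (lo + (i : nat)%:Z) else 0).

(* coefficient of y^k x^n in lambda(y)/(x-y) = sum_k sum_{j<=k} lambda_{k-j} x^{-j-1} y^k *)
Definition cauchy_y (K : fieldType) (lam : nat -> K) (k : nat) (n : int) : K :=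
  let m := (- n - 1)%R in
  if (0 <= m) && (m <= k%:Z) then lam (k - absz m)%N else 0.

(* coefficient of y^k x^n in lambda(x)/(x-y) = sum_j sum_k lambda_j x^{j-k-1} y^k *)
Definition cauchy_x (K : fieldType) (lam : nat -> K) (k : nat) (n : int) : K :=
  if 0 <= n + k%:Z + 1 then lam (absz (n + k%:Z + 1)) else 0.

(* r is in standard form r = lambda(y)/(x-y) gamma + r0(x,y) with       *)
(* lambda in k[[z]]^x (i.e. lambda_0 <> 0) and r0 i j the coefficient   *)
(* of x^i y^j of r0 in (g (x) g)[[x,y]].                                *)
Definition standard_form (K : fieldType) (d : nat)
  (r : nat -> int -> 'M[K]_d) (lam : nat -> K) (r0 : nat -> nat -> 'M[K]_d) : Prop :=
  lam 0%N != 0 /\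
  forall (k : nat) (n : int),
    r k n = cauchy_y lam k n *: 1%:M + (if 0 <= n then r0 (absz n) k else 0).

(* coefficients (y^k x^n) of rbar(x,y) = lambda(x)/(x-y) gamma - tau(r0(y,x)) *)
Definition rbar (K : fieldType) (d : nat) (lam : nat -> K) (r0 : nat -> nat -> 'M[K]_d)
  (k : nat) (n : int) : 'M[K]_d :=
  cauchy_x lam k n *: 1%:M - (if 0 <= n then (r0 k (absz n))^T else 0).

(* The three commutators, computed in g (x) g (x) g ⊂ U(g)^{(x)3}, as   *)
(* the coefficient of x1^n1 x2^n2 x3^k3 in k((x1))((x2))[[x3]], tensor *)
(* component e_p (x) e_q (x) e_t.  Finite ranges are exact since series *)
(* in standard form have coefficient 0 at y^k x^n whenever n < -k-1.   *)
Definition cybe_term1 (K : fieldType) (d : nat) (c : 'I_d -> 'I_d -> 'I_d -> K)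
  (s : nat -> int -> 'M[K]_d) (n1 n2 : int) (k3 : nat) (p q t : 'I_d) : K :=
  (* [r^12, r^13] *)
  if n2 < 0 then 0 else
  isum (- n2 - 1) (n1 + k3%:Z + 1) (fun a =>
    \sum_(i < d) \sum_(l < d) (s (absz n2) a) i q * (s k3 (n1 - a)) l t * c i l p).

Definition cybe_term2 (K : fieldType) (d : nat) (c : 'I_d -> 'I_d -> 'I_d -> K)
  (s : nat -> int -> 'M[K]_d) (n1 n2 : int) (k3 : nat) (p q t : 'I_d) : K :=
  (* [r^12, r^23] *)
  isum 0 (n2 + k3%:Z + 1) (fun b =>
    \sum_(j < d) \sum_(l < d) (s (absz b) n1) p j * (s k3 (n2 - b)) l t * c j l q).

Definition cybe_term3 (K : fieldType) (d : nat) (c : 'I_d -> 'I_d -> 'I_d -> K)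
  (s sb : nat -> int -> 'M[K]_d) (n1 n2 : int) (k3 : nat) (p q t : 'I_d) : K :=
  (* [r^13, rbar^23] *)
  \sum_(k < k3.+1) \sum_(m < d) \sum_(u < d)
     (s k n1) p m * (sb (k3 - k)%N n2) q u * c m u t.

Definition gen_cybe (K : fieldType) (d : nat) (c : 'I_d -> 'I_d -> 'I_d -> K)
  (s sb : nat -> int -> 'M[K]_d) : Prop :=
  forall (n1 n2 : int) (k3 : nat) (p q t : 'I_d),
    cybe_term1 c s n1 n2 k3 p q t + cybe_term2 c s n1 n2 k3 p q t
    + cybe_term3 c s sb n1 n2 k3 p q t = 0.

Definition formal_gen_rmatrix (K : fieldType) (d : nat) (c : 'I_d -> 'I_d -> 'I_d -> K)
  (r : nat -> int -> 'M[K]_d) : Prop :=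
  exists (lam : nat -> K) (r0 : nat -> nat -> 'M[K]_d),
    standard_form r lam r0 /\ gen_cybe c r (rbar lam r0).

Definition lam_one (K : fieldType) : nat -> K := fun j => (j == 0%N)%:R.

Definition normalized_formal_gen_rmatrix (K : fieldType) (d : nat)
  (c : 'I_d -> 'I_d -> 'I_d -> K) (r : nat -> int -> 'M[K]_d) : Prop :=
  exists r0 : nat -> nat -> 'M[K]_d,
    standard_form r (lam_one K) r0 /\ gen_cybe c r (rbar (lam_one K) r0).

(* g((z)) : functions f : int -> 'rV_d (f n = coefficient of z^n) with *)
(* support bounded below; g[[z]] : those vanishing at negative n.       *)
(* Subsets of g((z)) are predicates.                                    *)

Definition laurent (K : fieldType) (d : nat) (f : int -> 'rV[K]_d) : Prop :=
  exists N : int, forall n, n < N -> f n = 0.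

Definition taylor (K : fieldType) (d : nat) (f : int -> 'rV[K]_d) : Prop :=
  forall n : int, n < 0 -> f n = 0.

Definition vanish_below (K : fieldType) (d : nat) (N : nat) (f : int -> 'rV[K]_d) : Prop :=
  forall n : int, n < - N%:Z -> f n = 0.

(* bracket of g((z)) : [f,g](n) = sum_{a+b=n} [f a, g b]; exact when f, g *)
(* vanish below -N. *)
Definition lbr (K : fieldType) (d : nat) (c : 'I_d -> 'I_d -> 'I_d -> K)
  (N : nat) (f g : int -> 'rV[K]_d) (n : int) : 'rV[K]_d :=
  isum (- N%:Z) (n + N%:Z) (fun a => lie c (f a) (g (n - a))).

Definition lie_subalgebra (K : fieldType) (d : nat) (c : 'I_d -> 'I_d -> 'I_d -> K)
  (W : (int -> 'rV[K]_d) -> Prop) : Prop :=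
  [/\ (forall f, W f -> laurent f),
      W (fun _ => 0),
      (forall f g, W f -> W g -> W (fun n => f n + g n)),
      (forall (a : K) f, W f -> W (fun n => a *: f n)) &
      (forall f g (N : nat), W f -> W g -> vanish_below N f -> vanish_below N g ->
         W (lbr c N f g))].

Definition taylor_complement (K : fieldType) (d : nat) (W : (int -> 'rV[K]_d) -> Prop) : Prop :=
  (forall f, laurent f ->
     exists p w, [/\ taylor p, W w & forall n, f n = p n + w n]) /\
  (forall w, W w -> taylor w -> forall n, w n = 0).

(* g(s) = span_K { s_{k,i}(z) }, where s = sum_k sum_i s_{k,i}(x) (x) b_i y^k, *)
(* i.e. s_{k,i} has z^n-coefficient the i-th column of s k n.           *)
Definition gspan (K : fieldType) (d : nat) (s : nat -> int -> 'M[K]_d)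
  (f : int -> 'rV[K]_d) : Prop :=
  exists (m : nat) (ks : 'I_m -> nat) (ids : 'I_m -> 'I_d) (cs : 'I_m -> K),
    forall n : int, f n = \sum_(t < m) cs t *: (\row_j (s (ks t) n) j (ids t)).

(* Write r = gamma/(x-y) + r0.  The coefficient vectors r_{k,i}(z) of r then have
   principal part z^{-k-1} b_i, so they form a "dual basis": every element of g(r)
   is recovered from its principal part (ppart), whence g((z)) = g[[z]] (+) g(r),
   and r is determined by g(r).  For the bracket, the generalized CYBE is read
   coefficientwise as a row vector in x1 (cybe_row): its [r^12, r^13] term is the
   bracket of two basis vectors of g(r), its other two terms lie in the span g(r),
   and its principal part in x1 vanishes identically by the cyclic symmetry of the
   structure constants in an orthonormal basis of the Killing form.  Hence the
   CYBE says exactly that g(r) is closed under brackets; conversely, for W as in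
   the statement the dual basis of W defines r, each CYBE row lies in W and in
   g[[z]], and therefore vanishes. *)

From HB Require Import structures.
From mathcomp Require Import all_boot all_order all_algebra zify ring.
From Stdlib Require Import FunctionalExtensionality ClassicalEpsilon.
Import Order.TTheory GRing.Theory Num.Theory.
Local Open Scope ring_scope.
Set Implicit Arguments. Unset Strict Implicit. Unset Printing Implicit Defensive.

Section IntervalSums.
Variable V : nmodType.
Implicit Types (F G : int -> V) (lo hi : int).

Lemma isum_ext lo hi F G : (forall a, F a = G a) -> isum lo hi F = isum lo hi G.
Proof. by move=> eFG; apply: eq_bigr => i _; rewrite eFG. Qed.

Lemma isum_add lo hi F G :
  isum lo hi (fun a => F a + G a) = isum lo hi F + isum lo hi G.
Proof. by rewrite /isum -big_split; apply: eq_bigr => i _; case: ifP => _ /=; rewrite ?addr0. Qed.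

Lemma isum_sum lo hi m (F : 'I_m -> int -> V) :
  isum lo hi (fun a => \sum_(t < m) F t a) = \sum_(t < m) isum lo hi (F t).
Proof. by rewrite /isum exchange_big; apply: eq_bigr => i _; case: ifP => // _; rewrite big1. Qed.

Lemma isum_as_window lo hi (B : int) (T : nat) F :
  B <= lo -> hi < B + T%:Z ->
  isum lo hi F = \sum_(i < T) (if (lo <= B + i%:Z) && (B + i%:Z <= hi)
                               then F (B + i%:Z) else 0).
Proof.
move=> hB hT; have [hlt|hge] := ltP hi lo.
  rewrite /isum big1; last by move=> i _; case: ifP => // h; exfalso; lia.
  by rewrite big1 // => i _; case: ifP => // /andP [h1 h2]; exfalso; lia.
set L := absz (hi - lo + 1); set s := absz (lo - B).
have hsL : (s + L <= T)%N by rewrite /s /L; lia.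
rewrite -(big_mkord xpredT (fun i => if (lo <= B + i%:Z) && (B + i%:Z <= hi)
                                      then F (B + i%:Z) else 0)).
rewrite (@big_cat_nat _ _ _ s 0%N T) //=; last by lia.
rewrite (@big_cat_nat _ _ _ (s + L)%N s T) //=; last by lia.
rewrite big_nat_cond big1 ?add0r; last first.
  by move=> i /andP [/andP [_ hi'] _]; case: ifP => // /andP [h1 h2]; exfalso; lia.
rewrite [X in _ + X]big_nat_cond [X in _ + X]big1 ?addr0; last first.
  by move=> i /andP [/andP [hi1 hi2] _]; case: ifP => // /andP [h1 h2]; exfalso; lia.
rewrite -{1}(add0n s) big_addn addKn big_mkord /isum; apply: eq_bigr => i _.
have -> : B + (i + s)%N%:Z = lo + (i : nat)%:Z by rewrite /s; lia.
have -> : (lo <= lo + (i : nat)%:Z) = true by lia.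
by [].
Qed.

Lemma isum_window lo hi lo' hi' F :
  lo' <= lo -> hi <= hi' ->
  (forall a, lo' <= a -> a <= hi' -> (a < lo) \/ (hi < a) -> F a = 0) ->
  isum lo' hi' F = isum lo hi F.
Proof.
move=> h1 h2 HF.
rewrite (@isum_as_window lo' hi' lo' (absz (hi' - lo')).+1); [|lia|lia].
rewrite (@isum_as_window lo hi lo' (absz (hi' - lo')).+1); [|lia|lia].
apply: eq_bigr => i _; case: ifP => /= ha; case: ifP => /= hb //.
- case/andP: ha => ha1 ha2; apply: HF => //.
  by move/negbT: hb; rewrite negb_and -!ltNge => /orP [h|h]; [left|right].
- exfalso; case/andP: hb => hb1 hb2; move/negbT: ha; rewrite negb_and -!ltNge.
  by case/orP => h; lia.
Qed.

Lemma isum_point lo hi (a0 : int) F :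
  (forall a, lo <= a -> a <= hi -> a != a0 -> F a = 0) ->
  isum lo hi F = if (lo <= a0) && (a0 <= hi) then F a0 else 0.
Proof.
move=> HF; rewrite /isum; case: ifP => [/andP [h1 h2]|h].
  have hj : (absz (a0 - lo)%R < absz (hi - lo + 1)%R)%N by lia.
  rewrite (bigD1 (Ordinal hj)) //= big1 ?addr0.
    have -> : lo + (absz (a0 - lo))%:Z = a0 by lia.
    by rewrite h2.
  move=> i hne; case: ifP => // h3; apply: HF; try lia; apply/eqP => e.
  by move/eqP: hne; apply; apply/val_inj => /=; lia.
by rewrite big1 // => i _; case: ifP => // h2; apply: HF; lia.
Qed.

End IntervalSums.

Lemma isum_scale (R : pzRingType) (V : lmodType R) lo hi (x : R) (F : int -> V) :
  isum lo hi (fun a => x *: F a) = x *: isum lo hi F.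
Proof. by rewrite /isum scaler_sumr; apply: eq_bigr => i _; case: ifP => _; rewrite ?scaler0. Qed.

Lemma isum_mxE (R : pzRingType) m n lo hi (F : int -> 'M[R]_(m, n)) i j :
  (isum lo hi F) i j = isum lo hi (fun a => F a i j).
Proof. by rewrite /isum summxE; apply: eq_bigr => t _; case: ifP => _; rewrite ?mxE. Qed.

Section LinearClosure.
Variables (K : fieldType) (d : nat).
Local Notation series := (int -> 'rV[K]_d).
Implicit Types (P : series -> Prop) (f g : series).

Lemma pred_eqfun P f g : (forall n, f n = g n) -> P f -> P g.
Proof. by move=> /functional_extensionality ->. Qed.

Definition linear_closed P : Prop :=
  [/\ P (fun _ => 0), (forall f g, P f -> P g -> P (fun n => f n + g n)) &
      (forall (a : K) f, P f -> P (fun n => a *: f n))].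

Section Closed.
Variables (P : series -> Prop) (hP : linear_closed P).

Lemma lclosed0 : P (fun _ => 0). Proof. by case: hP. Qed.

Lemma lclosedD f g : P f -> P g -> P (fun n => f n + g n).
Proof. by case: hP => _ PD _; apply: PD. Qed.

Lemma lclosedZ (a : K) f : P f -> P (fun n => a *: f n).
Proof. by case: hP => _ _ PZ; apply: PZ. Qed.

Lemma lclosedB f g : P f -> P g -> P (fun n => f n - g n).
Proof.
move=> Pf Pg; apply: (pred_eqfun (f := fun n => f n + (-1) *: g n)).
  by move=> n; rewrite scaleN1r.
by apply: lclosedD => //; apply: lclosedZ.
Qed.

Lemma lclosed_sum m (F : 'I_m -> series) :
  (forall t, P (F t)) -> P (fun n => \sum_(t < m) F t n).
Proof.
elim: m F => [|m IH] F PF.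
  by apply: pred_eqfun lclosed0 => n; rewrite big_ord0.
apply: (pred_eqfun (f := fun n => \sum_(t < m) F (widen_ord (leqnSn m) t) n + F ord_max n)).
  by move=> n; rewrite big_ord_recr.
by apply: lclosedD => //; apply: IH.
Qed.

Lemma lclosed_isum lo hi (G : int -> series) :
  (forall b, P (G b)) -> P (fun n => isum lo hi (fun b => G b n)).
Proof.
move=> PG; apply: (lclosed_sum (F := fun t n => if lo + (t : nat)%:Z <= hi
                                                then G (lo + (t : nat)%:Z) n else 0)) => t.
by case: (lo + (t : nat)%:Z <= hi); [apply: PG | apply: lclosed0].
Qed.

End Closed.

Definition gvec (s : nat -> int -> 'M[K]_d) (k : nat) (i : 'I_d) : series :=
  fun n => \row_j (s k n) j i.

Variable s : nat -> int -> 'M[K]_d.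

Lemma gspan_lclosed : linear_closed (gspan s).
Proof.
split.
- have no_index : 'I_0 -> 'I_d by case.
  by exists 0%N, (fun _ => 0%N), no_index, (fun _ => 0) => n; rewrite big_ord0.
- move=> f g [m1 [k1 [i1 [c1 H1]]]] [m2 [k2 [i2 [c2 H2]]]].
  exists (m1 + m2)%N,
   (fun t => match split t with inl a => k1 a | inr b => k2 b end),
   (fun t => match split t with inl a => i1 a | inr b => i2 b end),
   (fun t => match split t with inl a => c1 a | inr b => c2 b end).
  move=> n; rewrite big_split_ord /= H1 H2; congr (_ + _); apply: eq_bigr => t _.
  + by rewrite (unsplitK (inl t)).
  + by rewrite (unsplitK (inr t)).
- move=> a f [m [k [i [cs H]]]]; exists m, k, i, (fun t => a * cs t) => n.
  by rewrite H scaler_sumr; apply: eq_bigr => t _; rewrite scalerA.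
Qed.

Lemma gspan_gvec k i : gspan s (gvec s k i).
Proof.
exists 1%N, (fun _ => k), (fun _ => i), (fun _ => 1) => n.
by rewrite big_ord1 scale1r.
Qed.

Lemma gspan_min P :
  linear_closed P -> (forall k i, P (gvec s k i)) -> forall f, gspan s f -> P f.
Proof.
move=> hP Pg f [m [k [i [cs H]]]]; apply: pred_eqfun (fun n => esym (H n)) _.
apply: (lclosed_sum hP) => t; apply: (pred_eqfun _ (lclosedZ hP (cs t) (Pg (k t) (i t)))) => n.
by rewrite /gvec.
Qed.

End LinearClosure.

Lemma sum_delta (R : pzSemiRingType) d (a : 'I_d) (F : 'I_d -> R) :
  \sum_(i < d) (a == i)%:R * F i = F a.
Proof.
rewrite (bigD1 a) //= eqxx mul1r big1 ?addr0 // => i /negbTE.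
by rewrite eq_sym => ->; rewrite mul0r.
Qed.

Lemma ebasisE (K : fieldType) d (i j : 'I_d) : ebasis K i 0 j = (i == j)%:R.
Proof. by rewrite /ebasis mxE eq_sym. Qed.

Section LieAlgebra.
Variables (K : fieldType) (d : nat) (c : 'I_d -> 'I_d -> 'I_d -> K).
Local Notation "[ u , v ]" := (lie c u v) (format "[ u ,  v ]").
Implicit Types u v w : 'rV[K]_d.

Lemma lie_entry u v p : [u, v] 0 p = \sum_i \sum_j u 0 i * v 0 j * c i j p.
Proof.
by rewrite /lie summxE; apply: eq_bigr => i _; rewrite summxE; apply: eq_bigr => j _; rewrite !mxE.
Qed.

Lemma lie_ebasis i j p : [ebasis K i, ebasis K j] 0 p = c i j p.
Proof.
rewrite lie_entry; under eq_bigr => a _ do under eq_bigr => b _ do rewrite !ebasisE -mulrA.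
by under eq_bigr => a _ do rewrite -mulr_sumr; rewrite !sum_delta.
Qed.

Lemma lieDl u u' v : [u + u', v] = [u, v] + [u', v].
Proof.
apply/rowP => p; rewrite mxE !lie_entry -big_split; apply: eq_bigr => i _.
by rewrite -big_split; apply: eq_bigr => j _; rewrite mxE !mulrDl.
Qed.

Lemma lieDr u v v' : [u, v + v'] = [u, v] + [u, v'].
Proof.
apply/rowP => p; rewrite mxE !lie_entry -big_split; apply: eq_bigr => i _.
by rewrite -big_split; apply: eq_bigr => j _; rewrite mxE mulrDr !mulrDl.
Qed.

Lemma lieZl a u v : [a *: u, v] = a *: [u, v].
Proof.
apply/rowP => p; rewrite mxE !lie_entry mulr_sumr; apply: eq_bigr => i _.
by rewrite mulr_sumr; apply: eq_bigr => j _; rewrite mxE !mulrA.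
Qed.

Lemma lieZr a u v : [u, a *: v] = a *: [u, v].
Proof.
apply/rowP => p; rewrite mxE !lie_entry mulr_sumr; apply: eq_bigr => i _.
by rewrite mulr_sumr; apply: eq_bigr => j _; rewrite mxE mulrCA !mulrA.
Qed.

Lemma lie0l v : [0, v] = 0.
Proof. by have := lieZl 0 0 v; rewrite !scale0r. Qed.

Lemma lie0r v : [v, 0] = 0.
Proof. by have := lieZr 0 v 0; rewrite !scale0r. Qed.

Lemma lie_suml m (F : 'I_m -> 'rV[K]_d) v : [\sum_(t < m) F t, v] = \sum_(t < m) [F t, v].
Proof. exact: (big_morph (lie c ^~ v) (fun x y => lieDl x y v) (lie0l v)). Qed.

Lemma lie_sumr m (F : 'I_m -> 'rV[K]_d) v : [v, \sum_(t < m) F t] = \sum_(t < m) [v, F t].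
Proof. exact: (big_morph (lie c v) (lieDr v) (lie0r v)). Qed.

Lemma ad_mxP u w : w *m ad_mx c u = [u, w].
Proof.
apply/rowP => j; rewrite !mxE lie_entry.
under eq_bigr => i _ do rewrite mxE lie_entry.
under eq_bigr => i _ do under eq_bigr => a _ do under eq_bigr => b _ do
  rewrite ebasisE (mulrC (u 0 a)) -mulrA.
under eq_bigr => i _ do under eq_bigr => a _ do rewrite sum_delta.
under eq_bigr => i _ do rewrite mulr_sumr.
by rewrite exchange_big; apply: eq_bigr => a _; apply: eq_bigr => i _; rewrite mulrCA mulrA.
Qed.

Lemma ad_mx_lin u : ad_mx c u = \sum_i u 0 i *: ad_mx c (ebasis K i).
Proof.
apply/matrixP => a b; rewrite summxE !mxE lie_entry.
apply: eq_bigr => i _; rewrite !mxE lie_ebasis.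
rewrite (bigD1 a) //= big1 ?addr0; first by rewrite ebasisE eqxx mulr1.
by move=> j /negbTE; rewrite ebasisE eq_sym => ->; rewrite mulr0 mul0r.
Qed.

Lemma killingC u v : killing c u v = killing c v u.
Proof. exact: mxtrace_mulC. Qed.

Hypothesis hlie : is_lie_algebra c.

Lemma lie_anti u v : [u, v] = - [v, u].
Proof.
have [lie_alt _] := hlie; have := lie_alt (u + v).
by rewrite lieDl !lieDr !lie_alt add0r addr0 => /eqP; rewrite addr_eq0 => /eqP.
Qed.

Lemma lie_jacobi u v w : [[u, v], w] = [u, [v, w]] - [v, [u, w]].
Proof.
have [_ jacobi] := hlie; have := jacobi u v w.
rewrite (lie_anti w [u, v]) (lie_anti w u) -scaleN1r lieZr scaleN1r => H.
by apply/esym/eqP; rewrite -subr_eq0; apply/eqP.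
Qed.

Lemma ad_mx_lie u v :
  ad_mx c [u, v] = ad_mx c v *m ad_mx c u - ad_mx c u *m ad_mx c v.
Proof.
apply/row_matrixP => i; rewrite !rowE mulmxBr !mulmxA !ad_mxP; exact: lie_jacobi.
Qed.

Lemma killing_inv u v w : killing c [u, v] w = killing c u [v, w].
Proof.
rewrite /killing !ad_mx_lie mulmxBr mulmxBl !raddfB /= !mulmxA.
by congr (_ - _); rewrite mxtrace_mulC mulmxA.
Qed.

(* For an orthonormal basis the structure constants are cyclically symmetric. *)
Hypothesis hon : killing_orthonormal c.

Lemma killing_ebasis v p : killing c v (ebasis K p) = v 0 p.
Proof.
rewrite /killing (ad_mx_lin v) mulmx_sumr raddf_sum /=.
rewrite -[RHS](sum_delta p (fun i => v 0 i)); apply: eq_bigr => i _.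
by rewrite -scalemxAr linearZ /= -/(killing c _ _) hon eq_sym mulrC.
Qed.

Lemma struct_cyclic i j p : c i j p = c j p i.
Proof.
rewrite -lie_ebasis -killing_ebasis killing_inv killingC.
by rewrite killing_ebasis lie_ebasis.
Qed.

Lemma struct_anti i j p : c i j p = - c j i p.
Proof. by rewrite -!lie_ebasis lie_anti mxE. Qed.

End LieAlgebra.

Section LoopBracket.
Variables (K : fieldType) (d : nat) (c : 'I_d -> 'I_d -> 'I_d -> K).
Local Notation series := (int -> 'rV[K]_d).

Lemma lbr_window (N M : nat) (f g : series) :
  vanish_below N f -> vanish_below N g -> (N <= M)%N ->
  forall n, lbr c N f g n = lbr c M f g n.
Proof.
move=> hf hg hNM n; symmetry; apply: isum_window; try lia.
move=> a ha1 ha2 [ha|ha]; first by rewrite hf ?lie0l //; lia.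
by rewrite hg ?lie0r //; lia.
Qed.

Lemma lbr_bilin (M : nat) m1 m2 (a : 'I_m1 -> K) (b : 'I_m2 -> K)
  (F : 'I_m1 -> series) (G : 'I_m2 -> series) n :
  lbr c M (fun x => \sum_(t < m1) a t *: F t x) (fun x => \sum_(u < m2) b u *: G u x) n =
  \sum_(t < m1) \sum_(u < m2) (a t * b u) *: lbr c M (F t) (G u) n.
Proof.
rewrite /lbr.
under isum_ext => x do (rewrite lie_suml; under eq_bigr => t _ do rewrite lie_sumr).
rewrite isum_sum; apply: eq_bigr => t _.
under isum_ext => x do under eq_bigr => u _ do rewrite lieZl lieZr scalerA.
by rewrite isum_sum; apply: eq_bigr => u _; rewrite isum_scale.
Qed.

End LoopBracket.

(** Series in normalized standard form: the principal part of r is gamma/(x-y). *)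

Lemma cauchy_y_one (K : fieldType) k n : cauchy_y (lam_one K) k n = (n == - k%:Z - 1)%:R.
Proof.
rewrite /cauchy_y /lam_one; case: ifP => [/andP [h1 h2]|h].
  by case: eqP => e1; case: eqP => e2 //; exfalso; lia.
by case: eqP => e //; exfalso; move/negbT: h; rewrite negb_and -!ltNge; case/orP; lia.
Qed.

Lemma cauchy_x_one (K : fieldType) k n : cauchy_x (lam_one K) k n = (n + k%:Z + 1 == 0)%:R.
Proof.
rewrite /cauchy_x /lam_one; case: ifP => h.
  by case: eqP => e1; case: eqP => e2 //; exfalso; lia.
by case: eqP => e //; exfalso; move/negbT: h; rewrite -ltNge; lia.
Qed.

Lemma sum_pick2 (V : nmodType) (Kb d k : nat) (hk : (k < Kb)%N) (i : 'I_d)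
  (G : nat -> 'I_d -> V) :
  \sum_(k' < Kb) \sum_(i' < d) (if (k == k') && (i == i') then G k' i' else 0) = G k i.
Proof.
rewrite (bigD1 (Ordinal hk)) //= [X in _ + X]big1 ?addr0.
  rewrite (bigD1 i) //= !eqxx /= big1 ?addr0 // => i' /negbTE.
  by rewrite eq_sym => ->.
move=> k' hk'; apply: big1 => i' _; case: ifP => // /andP [/eqP e _].
by move/eqP: hk'; case; apply/val_inj.
Qed.

Section NormalizedStandardForm.
Variables (K : fieldType) (d : nat) (r : nat -> int -> 'M[K]_d) (r0 : nat -> nat -> 'M[K]_d).
Hypothesis hs : standard_form r (lam_one K) r0.
Local Notation series := (int -> 'rV[K]_d).

Lemma r_nonneg k n : 0 <= n -> r k n = r0 (absz n) k.
Proof.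
case: hs => _ -> hn; rewrite cauchy_y_one hn.
have -> : (n == - k%:Z - 1) = false by lia.
by rewrite scale0r add0r.
Qed.

Lemma r_neg k n i j : n < 0 -> r k n i j = ((n == - k%:Z - 1) && (i == j))%:R.
Proof.
case: hs => _ -> hn; have -> : (0 <= n) = false by lia.
rewrite cauchy_y_one addr0 !mxE.
by case: (n == _); case: (i == j); rewrite /= ?mulr1 ?mulr0.
Qed.

Lemma r_at k n i j : n = - k%:Z - 1 -> r k n i j = (i == j)%:R.
Proof. by move=> e; rewrite r_neg ?e ?eqxx //; lia. Qed.

Lemma r_off k n i j : n < 0 -> n != - k%:Z - 1 -> r k n i j = 0.
Proof. by move=> hn /negbTE hne; rewrite r_neg // hne. Qed.

Lemma r_small k n i j : n < - k%:Z - 1 -> r k n i j = 0.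
Proof. by move=> hn; rewrite r_off //; lia. Qed.

Lemma gvec_neg k i n : n < 0 -> gvec r k i n = (n == - k%:Z - 1)%:R *: ebasis K i.
Proof.
move=> hn; apply/rowP => j; rewrite !mxE r_neg //.
by case: (n == _); case: (j == i); rewrite /= ?mulr1 ?mulr0.
Qed.

Lemma gvec_vanish k i (N : nat) : (k < N)%N -> vanish_below N (gvec r k i).
Proof.
move=> hk n hn; rewrite gvec_neg; last by lia.
have -> : (n == - k%:Z - 1) = false by lia.
by rewrite scale0r.
Qed.

(* The element of g(r) with the same principal part z^{-k-1} as w, for k < Kb.  *)
Definition ppart (Kb : nat) (w : series) : series :=
  fun n => \sum_(k < Kb) \sum_i w (- k%:Z - 1) 0 i *: gvec r k i n.

Lemma gspan_ppart Kb w : gspan r (ppart Kb w).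
Proof.
have hP := gspan_lclosed r.
apply: (lclosed_sum hP) => k; apply: (lclosed_sum hP) => i.
exact (lclosedZ hP _ (gspan_gvec r k i)).
Qed.

Lemma ppart_neg Kb w n :
  n < 0 -> ppart Kb w n = if (absz (- n - 1) < Kb)%N then w n else 0.
Proof.
move=> hn; rewrite /ppart.
under eq_bigr => k _ do under eq_bigr => i _ do rewrite gvec_neg // scalerA mulrC -scalerA.
under eq_bigr => k _ do rewrite -scaler_sumr /ebasis -row_sum_delta.
case: ltnP => hk.
  rewrite (bigD1 (Ordinal hk)) //= big1 ?addr0.
    have -> : (n == - (absz (- n - 1))%:Z - 1) = true by lia.
    by rewrite scale1r; congr w; lia.
  move=> k /eqP hne; have -> : (n == - (k : nat)%:Z - 1) = false; last by rewrite scale0r.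
  by apply/eqP => e; apply: hne; apply/val_inj => /=; lia.
apply: big1 => k _; have -> : (n == - (k : nat)%:Z - 1) = false; last by rewrite scale0r.
by have := ltn_ord k; lia.
Qed.

Lemma ppart_gvec Kb k i n : (k < Kb)%N -> ppart Kb (gvec r k i) n = gvec r k i n.
Proof.
move=> hk; rewrite -[RHS](sum_pick2 hk i (fun k' i' => gvec r k' i' n)) /ppart.
apply: eq_bigr => k' _; apply: eq_bigr => i' _; rewrite mxE r_neg; last by lia.
have -> : (- (k' : nat)%:Z - 1 == - k%:Z - 1) = (k == k') by apply/eqP/eqP; lia.
by rewrite [i' == i]eq_sym; case: (_ && _); rewrite ?scale1r ?scale0r.
Qed.

Lemma ppart_lin Kb m (cs : 'I_m -> K) (F : 'I_m -> series) n :
  ppart Kb (fun x => \sum_(t < m) cs t *: F t x) n = \sum_(t < m) cs t *: ppart Kb (F t) n.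
Proof.
rewrite /ppart; under eq_bigr => k _ do under eq_bigr => i _ do rewrite summxE scaler_suml.
under eq_bigr => k _ do rewrite exchange_big; rewrite exchange_big.
apply: eq_bigr => t _; rewrite scaler_sumr; apply: eq_bigr => k _.
by rewrite scaler_sumr; apply: eq_bigr => i _; rewrite mxE scalerA.
Qed.

Lemma gspan_ppartE w : gspan r w -> exists Kb : nat, forall n, w n = ppart Kb w n.
Proof.
move=> [m [ks [ids [cs H]]]]; exists (\max_(t < m) ks t).+1 => n.
have -> : w = fun x => \sum_(t < m) cs t *: gvec r (ks t) (ids t) x.
  exact: functional_extensionality.
rewrite ppart_lin; apply: eq_bigr => t _; rewrite ppart_gvec //.
by rewrite ltnS; apply: leq_bigmax.
Qed.

Lemma gspan_taylor_eq0 w : gspan r w -> taylor w -> forall n, w n = 0.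
Proof.
move=> /gspan_ppartE [Kb hpp] hw n; rewrite hpp; apply: big1 => k _; apply: big1 => i _.
by rewrite hw ?mxE ?scale0r //; lia.
Qed.

Lemma gspan_laurent w : gspan r w -> laurent w.
Proof.
move=> /gspan_ppartE [Kb hw]; exists (- Kb%:Z) => n hn; rewrite hw.
apply: big1 => k _; apply: big1 => i _.
by rewrite (@gvec_vanish k i Kb) ?scaler0.
Qed.

Lemma gspan_decompose f : laurent f ->
  exists p w, [/\ taylor p, gspan r w & forall n, f n = p n + w n].
Proof.
move=> [N hN]; exists (fun n => f n - ppart (absz N) f n), (ppart (absz N) f).
split; [move=> n hn | exact: gspan_ppart | by move=> n; rewrite subrK].
rewrite ppart_neg //; case: ltnP => hk; first by rewrite subrr.
by rewrite hN ?subr0 //; lia.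
Qed.

Lemma gspan_complement : taylor_complement (gspan r).
Proof. by split; [exact: gspan_decompose | exact: gspan_taylor_eq0]. Qed.

End NormalizedStandardForm.

Lemma gspan_inj (K : fieldType) d (r1 r2 : nat -> int -> 'M[K]_d) r01 r02 :
  standard_form r1 (lam_one K) r01 -> standard_form r2 (lam_one K) r02 ->
  (forall f, gspan r1 f <-> gspan r2 f) -> forall k n, r1 k n = r2 k n.
Proof.
move=> hs1 hs2 heq k n; apply/matrixP => j i.
have h : gspan r2 (fun n => gvec r1 k i n - gvec r2 k i n).
  exact (lclosedB (gspan_lclosed r2) (proj1 (heq _) (gspan_gvec r1 k i)) (gspan_gvec r2 k i)).
have ht : taylor (fun n => gvec r1 k i n - gvec r2 k i n).
  by move=> m hm; rewrite (gvec_neg hs1) // (gvec_neg hs2) // subrr.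
move/(congr1 (fun v : 'rV_d => v 0 j)): (gspan_taylor_eq0 hs2 h ht n).
by rewrite !mxE => /eqP; rewrite subr_eq0 => /eqP.
Qed.

(** The principal part (in x1) of the generalized CYBE vanishes for a normalized
    series in standard form.  Only the coefficients of x1^{n1} with n1 < 0 are
    involved; there r^{12} and r^{13} reduce to gamma, and the three terms cancel
    by the cyclic symmetry of the structure constants. *)

Section CYBEPrincipalPart.
Variables (K : fieldType) (d : nat) (c : 'I_d -> 'I_d -> 'I_d -> K).
Hypotheses (c_cyc : forall i j p, c i j p = c j p i) (c_anti : forall i j p, c i j p = - c j i p).
Variables (r : nat -> int -> 'M[K]_d) (r0 : nat -> nat -> 'M[K]_d).
Hypothesis hs : standard_form r (lam_one K) r0.
Local Notation rb := (rbar (lam_one K) r0).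

Lemma sum_r_atl k (n : int) x (G : 'I_d -> K) :
  n = - k%:Z - 1 -> \sum_i r k n x i * G i = G x.
Proof.
by move=> e; rewrite -[RHS](sum_delta x); apply: eq_bigr => i _; rewrite (r_at hs).
Qed.

Lemma sum_r_atr k (n : int) x (G : 'I_d -> K) :
  n = - k%:Z - 1 -> \sum_i r k n i x * G i = G x.
Proof.
by move=> e; rewrite -[RHS](sum_delta x); apply: eq_bigr => i _; rewrite (r_at hs) // eq_sym.
Qed.

Lemma term2_principal n1 n2 k3 p q t : n1 < 0 ->
  cybe_term2 c r n1 n2 k3 p q t = \sum_l r k3 (n1 + n2 + 1) l t * c p l q.
Proof.
move=> hn1; rewrite /cybe_term2 (@isum_point _ _ _ (- n1 - 1)); last first.
  by move=> b hb0 _ hb; apply: big1 => j _; apply: big1 => l _; rewrite (r_off hs) ?mul0r //; lia.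
case: ifP => hr.
  have -> : n2 - (- n1 - 1) = n1 + n2 + 1 by lia.
  rewrite -(@sum_r_atl (absz (- n1 - 1)) n1 p (fun j => \sum_l r k3 (n1 + n2 + 1) l t * c j l q));
    last by lia.
  by apply: eq_bigr => j _; rewrite mulr_sumr; apply: eq_bigr => l _; rewrite mulrA.
symmetry; apply: big1 => l _; rewrite (r_small hs) ?mul0r //.
by move/negbT: hr; rewrite negb_and -!ltNge; case/orP; lia.
Qed.

Lemma term1_principal n1 n2 k3 p q t : n1 < 0 -> 0 <= n2 ->
  cybe_term1 c r n1 n2 k3 p q t =
    \sum_l r k3 (n1 + n2 + 1) l t * c q l p +
    (if 0 <= n1 + k3%:Z + 1 then \sum_i r (absz n2) (n1 + k3%:Z + 1) i q * c i t p else 0).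
Proof.
move=> hn1 hn2; rewrite /cybe_term1; have -> : (n2 < 0) = false by lia.
set F := fun a => \sum_i \sum_l r (absz n2) a i q * r k3 (n1 - a) l t * c i l p.
rewrite (@isum_ext _ _ _ _ (fun a => (if a < 0 then F a else 0) + (if a < 0 then 0 else F a)));
  last by move=> a; case: ifP; rewrite ?addr0 ?add0r.
rewrite isum_add (@isum_point _ _ _ (- n2 - 1)); last first.
  move=> a _ _ ha; case: ifP => // ha0; apply: big1 => i _; apply: big1 => l _.
  by rewrite (r_off hs) ?mul0r //; lia.
rewrite (@isum_point _ _ _ (n1 + k3%:Z + 1) (fun a => if a < 0 then 0 else F a)); last first.
  move=> a _ _ ha; case: ifP => // ha0; apply: big1 => i _; apply: big1 => l _.
  by rewrite [r k3 _ l t](r_off hs) ?mulr0 ?mul0r //; lia.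
have -> : (- n2 - 1 < 0) = true by lia.
congr (_ + _).
  case: ifP => hr; last first.
    symmetry; apply: big1 => l _; rewrite (r_small hs) ?mul0r //.
    by move/negbT: hr; rewrite negb_and -!ltNge; case/orP; lia.
  rewrite /F; have -> : n1 - (- n2 - 1) = n1 + n2 + 1 by lia.
  rewrite -(@sum_r_atr (absz n2) (- n2 - 1) q
              (fun i => \sum_l r k3 (n1 + n2 + 1) l t * c i l p)); last by lia.
  by apply: eq_bigr => i _; rewrite mulr_sumr; apply: eq_bigr => l _; rewrite mulrA.
case: (ltP (n1 + k3%:Z + 1) 0) => h0; first by case: ifP.
have -> : (- n2 - 1 <= n1 + k3%:Z + 1) && (n1 + k3%:Z + 1 <= n1 + k3%:Z + 1).
  by apply/andP; split; lia.
rewrite /F; apply: eq_bigr => i _; have -> : n1 - (n1 + k3%:Z + 1) = - k3%:Z - 1 by lia.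
rewrite -(@sum_r_atr k3 (- k3%:Z - 1) t (fun l => r (absz n2) (n1 + k3%:Z + 1) i q * c i l p)) //.
by apply: eq_bigr => l _; rewrite mulrCA mulrA.
Qed.

Lemma rbar_entry (k : nat) n2 q u :
  rb k n2 q u = (n2 + k%:Z + 1 == 0)%:R * (q == u)%:R -
                (if 0 <= n2 then r (absz n2) k%:Z u q else 0).
Proof.
rewrite /rbar !mxE cauchy_x_one; case: ifP => h; last by rewrite mxE.
by rewrite mxE (r_nonneg hs).
Qed.

Lemma term3_principal n1 n2 k3 p q t : n1 < 0 ->
  cybe_term3 c r rb n1 n2 k3 p q t =
  if 0 <= n1 + k3%:Z + 1 then
    (n2 + n1 + k3%:Z + 2 == 0)%:R * c p q t -
    (if 0 <= n2 then \sum_u r (absz n2) (n1 + k3%:Z + 1) u q * c p u t else 0)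
  else 0.
Proof.
move=> hn1; rewrite /cybe_term3; case: ifP => h0; last first.
  apply: big1 => k _; apply: big1 => m _; apply: big1 => u _.
  by rewrite (r_off hs) ?mul0r //; move/negbT: h0; rewrite -ltNge; have := ltn_ord k; lia.
have hk0 : (absz (- n1 - 1) < k3.+1)%N by lia.
rewrite (bigD1 (Ordinal hk0)) //= [X in _ + X]big1 ?addr0; last first.
  move=> k hk; apply: big1 => m _; apply: big1 => u _.
  rewrite (r_off hs) ?mul0r //; apply/eqP => e; move/eqP: hk; apply.
  by apply/val_inj => /=; lia.
rewrite (eq_bigr (fun m => r (absz (- n1 - 1)) n1 p m *
  \sum_u rb (k3 - absz (- n1 - 1)) n2 q u * c m u t)); last first.
  by move=> m _; rewrite mulr_sumr; apply: eq_bigr => u _; rewrite mulrA.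
rewrite sum_r_atl; last by lia.
under [LHS]eq_bigr => u _ do rewrite rbar_entry mulrBl.
have -> : (k3 - absz (- n1 - 1))%N%:Z = n1 + k3%:Z + 1 by lia.
have -> : (n2 + (n1 + k3%:Z + 1) + 1 == 0) = (n2 + n1 + k3%:Z + 2 == 0).
  by apply/eqP/eqP; lia.
rewrite sumrB; congr (_ - _).
  by under eq_bigr => u _ do rewrite -mulrA; rewrite -mulr_sumr sum_delta.
by case: ifP => _; last by rewrite big1 // => u _; rewrite mul0r.
Qed.

Lemma cybe_principal n1 n2 k3 p q t : n1 < 0 ->
  cybe_term1 c r n1 n2 k3 p q t + cybe_term2 c r n1 n2 k3 p q t
  + cybe_term3 c r rb n1 n2 k3 p q t = 0.
Proof.
move=> hn1; rewrite term2_principal // term3_principal //.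
case: (ltP n2 0) => hn2.
  rewrite /cybe_term1 hn2 add0r.
  case: (n1 + n2 + 1 =P - k3%:Z - 1) => e.
    rewrite (@sum_r_atr k3 (n1 + n2 + 1) t (fun l => c p l q)) //.
    have -> : (0 <= n1 + k3%:Z + 1) = true by lia.
    have -> : (n2 + n1 + k3%:Z + 2 == 0) = true by lia.
    by rewrite mul1r subr0 c_cyc c_anti c_cyc c_cyc addNr.
  rewrite big1 ?add0r; last by move=> l _; rewrite (r_off hs) ?mul0r //; lia.
  case: ifP => // _; have -> : (n2 + n1 + k3%:Z + 2 == 0) = false by lia.
  by rewrite mul0r subr0.
rewrite term1_principal //.
have cancel : \sum_l r k3 (n1 + n2 + 1) l t * c q l p
            + \sum_l r k3 (n1 + n2 + 1) l t * c p l q = 0.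
  rewrite -big_split big1 //= => l _.
  by rewrite -mulrDr [c p l q]c_cyc [c l q p]c_anti addrN mulr0.
rewrite [X in X + _]addrAC cancel add0r; case: ifP => h0; last by rewrite addr0.
have -> : (n2 + n1 + k3%:Z + 2 == 0) = false by lia.
rewrite mul0r sub0r; apply/eqP; rewrite subr_eq0; apply/eqP.
by apply: eq_bigr => i _; rewrite c_cyc [c t p i]c_cyc.
Qed.

End CYBEPrincipalPart.

(** The generalized CYBE as a bracket condition.  Read as a function of n1, the
    coefficient of x2^{n2} x3^{k3} (tensor factors q, t) of [r^{12}, r^{13}] is the
    bracket of two basis elements s_{n2,q}, s_{k3,t} of g(s), while the other two
    terms are linear combinations of such basis elements. *)

Section CYBEAsBracket.
Variables (K : fieldType) (d : nat) (c : 'I_d -> 'I_d -> 'I_d -> K).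
Local Notation series := (int -> 'rV[K]_d).

Definition cybe_row (s sb : nat -> int -> 'M[K]_d) n2 k3 q t : series :=
  fun n1 => \row_p (cybe_term1 c s n1 n2 k3 p q t + cybe_term2 c s n1 n2 k3 p q t
                    + cybe_term3 c s sb n1 n2 k3 p q t).

Lemma gen_cybeP s sb :
  gen_cybe c s sb <-> forall n2 k3 q t n1, cybe_row s sb n2 k3 q t n1 = 0.
Proof.
split=> [hc n2 k3 q t n1 | h n1 n2 k3 p q t]; first by apply/rowP => p; rewrite !mxE hc.
by move/(congr1 (fun v : 'rV_d => v 0 p)): (h n2 k3 q t n1); rewrite !mxE.
Qed.

Lemma term2_row s n1 n2 k3 q t :
  \row_p cybe_term2 c s n1 n2 k3 p q t =
  isum 0 (n2 + k3%:Z + 1) (fun b =>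
    \sum_j (\sum_l s k3 (n2 - b) l t * c j l q) *: gvec s (absz b) j n1).
Proof.
apply/rowP => p; rewrite mxE isum_mxE /cybe_term2; apply: isum_ext => b.
rewrite summxE; apply: eq_bigr => j _; rewrite !mxE mulr_suml; apply: eq_bigr => l _.
by ring.
Qed.

Lemma term3_row s sb n1 n2 k3 q t :
  \row_p cybe_term3 c s sb n1 n2 k3 p q t =
  \sum_(k < k3.+1) \sum_m (\sum_u sb (k3 - k)%N n2 q u * c m u t) *: gvec s k m n1.
Proof.
apply/rowP => p; rewrite mxE /cybe_term3 summxE; apply: eq_bigr => k _.
rewrite summxE; apply: eq_bigr => m _; rewrite !mxE mulr_suml; apply: eq_bigr => u _.
by ring.
Qed.

Lemma cybe_tail_closed (P : series -> Prop) s sb n2 k3 q t :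
  linear_closed P -> (forall k i, P (gvec s k i)) ->
  P (fun n1 => \row_p (cybe_term2 c s n1 n2 k3 p q t + cybe_term3 c s sb n1 n2 k3 p q t)).
Proof.
move=> hP Pg; apply: (pred_eqfun (f := fun n1 =>
  \row_p cybe_term2 c s n1 n2 k3 p q t + \row_p cybe_term3 c s sb n1 n2 k3 p q t)).
  by move=> n1; apply/rowP => p; rewrite !mxE.
apply: lclosedD => //.
  apply: (pred_eqfun (fun n1 => esym (term2_row s n1 n2 k3 q t))).
  apply: (lclosed_isum hP) => b; apply: (lclosed_sum hP) => j.
  exact (lclosedZ hP _ (Pg _ j)).
apply: (pred_eqfun (fun n1 => esym (term3_row s sb n1 n2 k3 q t))).
apply: (lclosed_sum hP) => k; apply: (lclosed_sum hP) => m.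
exact (lclosedZ hP _ (Pg _ m)).
Qed.

Variables (r : nat -> int -> 'M[K]_d) (r0 : nat -> nat -> 'M[K]_d).
Hypothesis hs : standard_form r (lam_one K) r0.

Lemma term1_row (M : nat) n1 n2 k3 q t :
  0 <= n2 -> (absz n2 < M)%N -> (k3 < M)%N ->
  \row_p cybe_term1 c r n1 n2 k3 p q t = lbr c M (gvec r (absz n2) q) (gvec r k3 t) n1.
Proof.
move=> hn2 h1 h2; apply/rowP => p; rewrite mxE /cybe_term1.
have -> : (n2 < 0) = false by lia.
rewrite /lbr isum_mxE; symmetry.
rewrite (@isum_window _ (- n2 - 1) (n1 + k3%:Z + 1)); try lia.
  apply: isum_ext => a; rewrite lie_entry; apply: eq_bigr => i _; apply: eq_bigr => l _.
  by rewrite !mxE.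
move=> a _ _ [ha|ha]; rewrite lie_entry; apply: big1 => i _; apply: big1 => l _.
  by rewrite mxE (r_off hs) ?mul0r //; lia.
by rewrite [gvec r k3 t _ 0 l]mxE (r_off hs) ?mulr0 ?mul0r //; lia.
Qed.

Lemma gspan_lbr_gvec (M k1 k2 : nat) i1 i2 :
  gen_cybe c r (rbar (lam_one K) r0) -> (k1 < M)%N -> (k2 < M)%N ->
  gspan r (lbr c M (gvec r k1 i1) (gvec r k2 i2)).
Proof.
move=> /gen_cybeP hc h1 h2.
have hP := gspan_lclosed r.
apply: (pred_eqfun (f := fun n1 => (-1) *: \row_p (cybe_term2 c r n1 k1%:Z k2 p i1 i2 +
                       cybe_term3 c r (rbar (lam_one K) r0) n1 k1%:Z k2 p i1 i2))).
  move=> n1; rewrite -(@term1_row M n1 k1%:Z k2 i1 i2) //.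
  move: (hc k1%:Z k2 i1 i2 n1) => /rowP e; apply/rowP => p; move: (e p).
  by rewrite !mxE => /eqP; rewrite -addrA addrC addr_eq0 => /eqP ->; rewrite mulN1r opprK.
exact (lclosedZ hP _ (cybe_tail_closed _ _ _ _ _ hP (gspan_gvec r))).
Qed.

End CYBEAsBracket.

Section ForwardMap.
Variables (K : fieldType) (d : nat) (c : 'I_d -> 'I_d -> 'I_d -> K).
Variables (r : nat -> int -> 'M[K]_d) (r0 : nat -> nat -> 'M[K]_d).
Hypotheses (hs : standard_form r (lam_one K) r0) (hc : gen_cybe c r (rbar (lam_one K) r0)).

(* By bilinearity, closure under brackets reduces to basis elements. *)
Lemma gspan_lbr f g (N : nat) : gspan r f -> gspan r g ->
  vanish_below N f -> vanish_below N g -> gspan r (lbr c N f g).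
Proof.
move=> [m1 [ks1 [is1 [cs1 H1]]]] [m2 [ks2 [is2 [cs2 H2]]]] hf hg.
set M := (N + \max_(t < m1) ks1 t + \max_(u < m2) ks2 u).+1.
have hP := gspan_lclosed r.
apply: (pred_eqfun (f := lbr c M f g)) => [n|].
  by rewrite (@lbr_window _ _ c N M) //; rewrite /M; lia.
apply: (pred_eqfun (f := fun n => \sum_(t < m1) \sum_(u < m2) (cs1 t * cs2 u) *:
    lbr c M (gvec r (ks1 t) (is1 t)) (gvec r (ks2 u) (is2 u)) n)) => [n|].
  rewrite -lbr_bilin /lbr; apply: isum_ext => a; by rewrite H1 H2.
apply: (lclosed_sum hP) => t; apply: (lclosed_sum hP) => u.
apply: (lclosedZ hP); apply: (gspan_lbr_gvec hs _ _ hc).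
  have : (ks1 t <= \max_(t0 < m1) ks1 t0)%N by exact: leq_bigmax.
  by rewrite /M; lia.
have : (ks2 u <= \max_(u0 < m2) ks2 u0)%N by exact: leq_bigmax.
by rewrite /M; lia.
Qed.

Lemma gspan_subalgebra : lie_subalgebra c (gspan r) /\ taylor_complement (gspan r).
Proof.
have [P0 PD PZ] := gspan_lclosed r.
split; last exact: gspan_complement hs.
by split=> //; [exact: gspan_laurent hs | move=> *; exact: gspan_lbr].
Qed.

End ForwardMap.

(** From subalgebras complementary to g[[z]] back to r-matrices: W has a unique
    basis w_{k,i} = z^{-k-1} b_i + O(1), and these are the coefficients of r. *)

Section InverseMap.
Variables (K : fieldType) (d : nat) (c : 'I_d -> 'I_d -> 'I_d -> K).
Local Notation series := (int -> 'rV[K]_d).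
Variable W : series -> Prop.
Hypotheses (hW : lie_subalgebra c W) (hC : taylor_complement W).

Lemma subalgebra_lclosed : linear_closed W.
Proof. by case: hW. Qed.

Lemma subalgebra_dual_vec (ki : nat * 'I_d) :
  exists w, W w /\ forall n, n < 0 -> w n = (n == - ki.1%:Z - 1)%:R *: ebasis K ki.2.
Proof.
case: ki => k i; set f := fun n : int => (n == - k%:Z - 1)%:R *: ebasis K i.
have [|p [w [tp Ww E]]] := hC.1 f.
  exists (- k%:Z - 1) => n hn; rewrite /f.
  have -> : (n == - k%:Z - 1) = false by lia.
  by rewrite scale0r.
by exists w; split=> // n hn; rewrite /= -/(f n) E tp ?add0r.
Qed.

(* The series whose coefficient vectors r_{k,i} are the dual basis of W. *)
Lemma subalgebra_rmatrix :
  exists r : nat -> int -> 'M[K]_d,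
    standard_form r (lam_one K) (fun a k => r k a%:Z) /\ forall k i, W (gvec r k i).
Proof.
have [wb hwb] := choice _ subalgebra_dual_vec.
set r := fun k n => \matrix_(j, i) wb (k, i) n 0 j.
have gvec_r k i : gvec r k i = wb (k, i).
  by apply: functional_extensionality => n; apply/rowP => j; rewrite !mxE.
exists r; split=> [|k i]; last by rewrite gvec_r; case: (hwb (k, i)).
split=> [|k n]; first by rewrite /lam_one eqxx oner_neq0.
rewrite cauchy_y_one; case: (ltP n 0) => hn.
  rewrite addr0; apply/matrixP => j i; rewrite !mxE.
  by case: (hwb (k, i)) => _ -> //=; rewrite mxE ebasisE [i == j]eq_sym.
have -> : (n == - k%:Z - 1) = false by lia.
by rewrite scale0r add0r; congr r; lia.
Qed.

Variables (r : nat -> int -> 'M[K]_d) (r0 : nat -> nat -> 'M[K]_d).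
Hypotheses (hs : standard_form r (lam_one K) r0) (hrW : forall k i, W (gvec r k i)).

Lemma subalgebra_gspan f : gspan r f <-> W f.
Proof.
have hL := subalgebra_lclosed; split; first exact: gspan_min.
move=> Wf; have [lauW _ _ _ _] := hW.
have [p [w [tp gw E]]] := gspan_decompose hs (lauW f Wf).
have Ww : W w := gspan_min hL hrW gw.
have hz := hC.2 _ (lclosedB hL Wf Ww).
have -> : f = w; last by [].
apply: functional_extensionality => n; apply/eqP; rewrite -subr_eq0; apply/eqP.
by apply: hz => m hm; rewrite E tp // add0r subrr.
Qed.

Hypotheses (c_cyc : forall i j p, c i j p = c j p i) (c_anti : forall i j p, c i j p = - c j i p).

(* Each CYBE coefficient row lies in W and in g[[z]], hence vanishes. *)
Lemma subalgebra_cybe : gen_cybe c r (rbar (lam_one K) r0).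
Proof.
have hL := subalgebra_lclosed; have [_ _ _ _ Wbr] := hW.
apply/gen_cybeP => n2 k3 q t.
have Wrow : W (cybe_row c r (rbar (lam_one K) r0) n2 k3 q t).
  apply: (pred_eqfun (f := fun n1 => \row_p cybe_term1 c r n1 n2 k3 p q t +
    \row_p (cybe_term2 c r n1 n2 k3 p q t + cybe_term3 c r (rbar (lam_one K) r0) n1 n2 k3 p q t))).
    by move=> n1; apply/rowP => p; rewrite !mxE addrA.
  apply: (lclosedD hL); last exact: cybe_tail_closed.
  case: (ltP n2 0) => hn2.
    apply: (pred_eqfun _ (lclosed0 hL)) => n1; apply/rowP => p.
    by rewrite !mxE /cybe_term1; have -> : (n2 < 0) = true by lia.
  apply: (pred_eqfun (f := lbr c (absz n2 + k3).+1 (gvec r (absz n2) q) (gvec r k3 t))).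
    by move=> n1; rewrite (term1_row c hs (M := (absz n2 + k3).+1)) //; lia.
  by apply: Wbr => //; apply: (gvec_vanish hs); lia.
apply: (hC.2 _ Wrow) => n1 hn1; apply/rowP => p.
by rewrite !mxE (cybe_principal c_cyc c_anti hs).
Qed.

End InverseMap.

Theorem proposition1p9 (K : fieldType) (d : nat) (c : 'I_d -> 'I_d -> 'I_d -> K)
  (charK : [pchar K] =i pred0)
  (hlie : is_lie_algebra c) (hss : semisimple c) (hon : killing_orthonormal c) :
  (* r |-> g(r) maps normalized formal generalized r-matrices to Lie     *)
  (* subalgebras W with g((z)) = g[[z]] (+) W ...                        *)
  (forall r, normalized_formal_gen_rmatrix c r ->
     lie_subalgebra c (gspan r) /\ taylor_complement (gspan r)) /\
  (* ... injectively ... *)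
  (forall r1 r2, normalized_formal_gen_rmatrix c r1 ->
     normalized_formal_gen_rmatrix c r2 ->
     (forall f, gspan r1 f <-> gspan r2 f) ->
     forall (k : nat) (n : int), r1 k n = r2 k n) /\
  (* ... and surjectively. *)
  (forall W : (int -> 'rV[K]_d) -> Prop,
     lie_subalgebra c W -> taylor_complement W ->
     exists r, normalized_formal_gen_rmatrix c r /\ (forall f, gspan r f <-> W f)).
Proof.
have hcyc := struct_cyclic hlie hon; have hanti := struct_anti hlie.
split; first by move=> r [r0 [hs hc]]; exact: gspan_subalgebra hs hc.
split=> [r1 r2 [r01 [hs1 _]] [r02 [hs2 _]] | W hW hC]; first exact: gspan_inj hs1 hs2.
have [r [hs hrW]] := subalgebra_rmatrix hC.
exists r; split; last by move=> f; exact: (subalgebra_gspan hW hC hs hrW).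
exists (fun a k => r k a%:Z); split=> //.
exact: (subalgebra_cybe hW hC hs hrW hcyc hanti).
Qed.
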